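(* For integers $n \geq j \geq k \geq 0$, $$f_{(n,j,k),j+k}(q) = q^{j^2+jk+k^2} \left( \begin{bmatrix} n \\ j \end{bmatrix}_q \begin{bmatrix} n \\ k \end{bmatrix}_q - q^{j-k+1} \begin{bmatrix} n \\ j+1 \end{bmatrix}_q \begin{bmatrix} n \\ k-1 \end{bmatrix}_q \right).$$
   Context: For a partition $\lambda\vdash N$, a standard Young tableau of shape $\lambda$ is a filling of the Ferrers diagram with $1,\dots,N$, increasing along rows and down columns; it has a descent at $m$ if $m+1$ lies in a strictly lower row than $m$; $\mathrm{des}$ is the number of descents and $\mathrm{maj}$ their sum. $f_{\lambda,i}(q)=\sum q^{\mathrm{maj}(\tau)}$ over standard Young tableaux of shape $\lambda$ with $\mathrm{des}(\tau)=i$. The $q$-binomial coefficient is $\frac{(q)_M}{(q)_N(q)_{M-N}}$, $(q)_m=(1-q)\cdots(1-q^m)$, for integers $0\le N\le M$, and $0$ otherwise. *)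

From HB Require Import structures.
From mathcomp Require Import all_boot all_order all_algebra.
Set Implicit Arguments. Unset Strict Implicit. Unset Printing Implicit Defensive.
Import Order.TTheory GRing.Theory Num.Theory.
Local Open Scope ring_scope.

(* A partition is given as a weakly decreasing list of parts la = [:: la_1; la_2; ...].
   Ferrers diagram in English convention: row i (0-based, top to bottom) has
   cells (i, c) for c < la_i. *)
Definition nrows (la : seq nat) : nat := size la.
Definition ncols (la : seq nat) : nat := head 0%N la.
Definition size_of (la : seq nat) : nat := sumn la.
Definition box (la : seq nat) : finType := ('I_(nrows la) * 'I_(ncols la))%type.
Definition in_diagram (la : seq nat) (x : box la) : bool := (x.2 < nth 0 la x.1)%N.

(* A filling: each box position gets a value in {0..N}; cells of the diagram
   get the entries 1..N, positions outside the diagram get 0 (dummy). *)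
Definition filling (la : seq nat) := {ffun box la -> 'I_(size_of la).+1}.

Definition is_SYT (la : seq nat) (T : filling la) : bool :=
  [&& [forall x, ~~ in_diagram x ==> (T x == 0 :> nat)],
      [forall x, in_diagram x ==> (0 < T x)%N],
      [forall x, forall y, (in_diagram x && in_diagram y && (T x == T y)) ==> (x == y)],
      [forall x, forall y, (in_diagram x && in_diagram y && (x.1 == y.1 :> nat)
                            && (x.2 < y.2)%N) ==> (T x < T y)%N] &
      [forall x, forall y, (in_diagram x && in_diagram y && (x.2 == y.2 :> nat)
                            && (x.1 < y.1)%N) ==> (T x < T y)%N]].

Definition row_of (la : seq nat) (T : filling la) (m : nat) : nat :=
  if [pick x | in_diagram x && (T x == m :> nat)] is Some x then (x.1 : nat) else 0%N.

Definition is_descent (la : seq nat) (T : filling la) (m : nat) : bool :=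
  (row_of T m < row_of T m.+1)%N.

Definition descents (la : seq nat) (T : filling la) : seq nat :=
  [seq m <- iota 1 (size_of la).-1 | is_descent T m].

Definition des (la : seq nat) (T : filling la) : nat := size (descents T).
Definition maj (la : seq nat) (T : filling la) : nat := sumn (descents T).

Definition f_poly (la : seq nat) (i : nat) : {poly int} :=
  \sum_(T : filling la | is_SYT T && (des T == i)) 'X^(maj T).

Definition qpoch (m : nat) : {poly int} := \prod_(i < m) (1 - 'X^(i.+1)).

(* The division is exact polynomial division (the divisor has
   leading coefficient +-1, a unit of int). *)
Definition qbinom (M N : int) : {poly int} :=
  if (0 <= N) && (N <= M) then
    qpoch `|M|%N %/ (qpoch `|N|%N * qpoch `|M - N|%N)
  else 0.

From HB Require Import structures.
From mathcomp Require Import all_boot all_order all_algebra.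
From mathcomp Require Import ring zify.
Import Order.TTheory GRing.Theory Num.Theory.
Set Implicit Arguments. Unset Strict Implicit. Unset Printing Implicit Defensive.

(* Reading a standard Young tableau of shape (n, j, k) row by row (letter i at
   position m when m lies in row i) is a bijection onto the lattice words in the
   letters 0, 1, 2 with content (n, j, k), turning descents into ascents.  An
   ascent ends in a letter 1 or 2, so there are at most j + k of them, with
   equality exactly when every 1 follows a 0 and every 2 follows a 0 or a 1.
   Sorting these words by their last letter gives a recursion in n for their
   generating function by maj, and by q-Pascal the q-binomial determinant of the
   theorem, weighted by q^(j^2+jk+k^2), satisfies the same recursion. *)

Lemma big_reindex_seq (R : Type) (idx : R) (op : Monoid.com_law idx) (I : finType)
    (T : eqType) (A : pred I) (f : I -> T) (s : seq T) (P : pred T) (G : T -> R) :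
  uniq s -> {in A &, injective f} ->
  (forall x, A x -> (f x \in s) && P (f x)) ->
  (forall w, w \in s -> P w -> exists2 x, A x & f x = w) ->
  \big[op/idx]_(x | A x) G (f x) = \big[op/idx]_(w <- s | P w) G w.
Proof.
move=> uniq_s f_inj f_into f_onto; rewrite -[RHS]big_filter.
have perm_image : perm_eq [seq f x | x <- enum A] [seq w <- s | P w].
  apply: uniq_perm.
  - by rewrite map_inj_in_uniq ?enum_uniq // => x y; rewrite !mem_enum; apply: f_inj.
  - exact: filter_uniq.
  move=> w; rewrite mem_filter; apply/mapP/andP => [[x] | [Pw w_in]].
    by rewrite mem_enum => /f_into /andP [fx_in Pfx] ->.
  by have [x Ax <-] := f_onto w w_in Pw; exists x; rewrite ?mem_enum.
by rewrite -(perm_big _ perm_image) big_map big_enum.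
Qed.

Section GaussianPolynomials.
Local Open Scope ring_scope.

Fixpoint qbin (n m : nat) : {poly int} :=
  match n, m with
  | _, 0%N => 1
  | 0%N, _.+1 => 0
  | n'.+1, m'.+1 => 'X^(n' - m') * qbin n' m' + qbin n' m'.+1
  end.

Lemma qbin0 n : qbin n 0 = 1.
Proof. by case: n. Qed.

Lemma qbin_eq0 n m : (n < m)%N -> qbin n m = 0.
Proof.
elim: n m => [|n IH] [|m] //= lt_nm.
by rewrite !IH ?mulr0 ?addr0 //; lia.
Qed.

Lemma qpoch0 : qpoch 0 = 1.
Proof. by rewrite /qpoch big_ord0. Qed.

Lemma qpochS m : qpoch m.+1 = qpoch m * (1 - 'X^(m.+1)).
Proof. by rewrite /qpoch big_ord_recr. Qed.

Lemma qbin_qpoch n m : (m <= n)%N -> qbin n m * (qpoch m * qpoch (n - m)) = qpoch n.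
Proof.
elim: n m => [|n IH] [|m] //= le_mn.
- by rewrite qpoch0 !mul1r.
- by rewrite qpoch0 !mul1r subn0.
rewrite subSS qpochS.
have [lt_mn|] := ltnP m n; last first.
  move=> le_nm; have -> : m = n by lia.
  rewrite (qbin_eq0 (ltnSn n)) addr0 subnn qpoch0 expr0 mul1r mulr1 qpochS.
  by rewrite -{2}(IH n (leqnn n)) subnn qpoch0 mulr1 mulrA.
have qpoch_nm : qpoch (n - m) = qpoch (n - m.+1) * (1 - 'X^(n - m)).
  have -> : (n - m = (n - m.+1).+1)%N by lia.
  by rewrite qpochS.
have X_split : 'X^(n.+1) = 'X^(n - m) * 'X^(m.+1) :> {poly int}.
  by rewrite -exprD; congr ('X^ _); lia.
have IHm := IH m (ltnW lt_mn); have IHm1 := IH m.+1 lt_mn.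
rewrite qpochS in IHm1; rewrite (qpochS n) X_split.
transitivity ('X^(n - m) * (qbin n m * (qpoch m * qpoch (n - m))) * (1 - 'X^(m.+1))
   + qbin n m.+1 * (qpoch m * (1 - 'X^(m.+1)) * qpoch (n - m.+1)) * (1 - 'X^(n - m))).
  by rewrite qpoch_nm; ring.
by rewrite IHm IHm1; ring.
Qed.

Lemma lead_coef_qpoch m : lead_coef (qpoch m) = (-1) ^+ m.
Proof.
elim: m => [|m IH]; first by rewrite qpoch0 lead_coef1.
have lead_factor : lead_coef (1 - 'X^(m.+1) : {poly int}) = -1.
  rewrite addrC lead_coefDl ?lead_coefN ?lead_coefXn //.
  by rewrite size_polyN size_polyXn size_poly1.
by rewrite qpochS lead_coefM IH lead_factor exprSr.
Qed.

Lemma qbinomE n m : qbinom n%:Z m%:Z = qbin n m.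
Proof.
rewrite /qbinom lez_nat /=; case: (leqP m n) => [le_mn|lt_nm]; last first.
  by rewrite qbin_eq0.
rewrite subzn // !absz_nat -(qbin_qpoch le_mn) Pdiv.IdomainUnit.mulpK //.
by rewrite lead_coefM !lead_coef_qpoch -exprD unitrX // unitrN1.
Qed.

Definition qbin_pred (n k : nat) : {poly int} := if k is k'.+1 then qbin n k' else 0.

Lemma qbinom_subr1 n k : qbinom n%:Z (k%:Z - 1) = qbin_pred n k.
Proof.
case: k => [|k] //=.
by rewrite -addn1 PoszD addrK qbinomE.
Qed.

(* The 2x2 determinant of the theorem, with [j + 1] and [k - 1] written as [j.+1] and [qbin_pred]. *)
Definition qdet (n j k : nat) : {poly int} :=
  qbin n j * qbin n k - 'X^(j.+1 - k) * qbin n j.+1 * qbin_pred n k.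

Lemma qdet_eq0 n j k : k = j.+1 \/ j = n.+1 -> qdet n j k = 0.
Proof.
rewrite /qdet => -[-> | ->] /=; first by rewrite subnn expr0 mul1r mulrC subrr.
by rewrite (qbin_eq0 (ltnSn n)) (@qbin_eq0 n n.+2) // mul0r mulr0 mul0r subrr.
Qed.

Lemma qdet_recSS n j k : (k <= j)%N -> (j <= n)%N ->
  qdet n.+1 j.+1 k.+1 = qdet n j.+1 k.+1 + 'X^(n - j) * qdet n j k.+1
    + 'X^(n - k) * qdet n j.+1 k + 'X^(n - j + (n - k)) * qdet n j k.
Proof.
move=> le_kj le_jn.
have [g def_j] : exists g, j = (k + g)%N by exists (j - k)%N; lia.
have [d def_n] : exists d, (n - j)%N = d by exists (n - j)%N.
rewrite /qdet /=.
have -> : (j.+2 - k.+1 = g.+1)%N by lia.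
have -> : (j.+1 - k.+1 = g)%N by lia.
have -> : (n - k = d + g)%N by lia.
have -> : (j.+2 - k = g.+2)%N by lia.
have -> : (j.+1 - k = g.+1)%N by lia.
rewrite def_n.
case: d def_n => [|d] def_n.
  have -> : n = j by lia.
  rewrite (qbin_eq0 (ltnSn j)) (@qbin_eq0 j j.+2) //.
  case: k def_j le_kj => [|k] def_j le_kj /=.
    by rewrite qbin0; ring.
  have -> : (j - k = g.+1)%N by lia.
  by rewrite !exprS; ring.
have -> : (n - j.+1 = d)%N by lia.
case: k def_j le_kj => [|k] def_j le_kj /=.
  by rewrite qbin0 !(exprS, exprD); ring.
have -> : (n - k = (d + g).+2)%N by lia.
by rewrite !(exprS, exprD); ring.
Qed.

Lemma qdet_rec n j k : (k <= j)%N -> (j <= n.+1)%N ->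
  qdet n.+1 j k = qdet n j k
   + (if j is j'.+1 then 'X^(n - j') * qdet n j' k else 0)
   + (if k is k'.+1 then 'X^(n - k') * qdet n j k' else 0)
   + (if j is j'.+1 then if k is k'.+1 then 'X^(n - j' + (n - k')) * qdet n j' k' else 0
      else 0).
Proof.
case: j => [|j] /= le_kj le_jn.
  by move: le_kj; rewrite leqn0 => /eqP ->; rewrite /qdet /= !qbin0 !mulr0 !addr0.
case: k le_kj => [|k] le_kj; last exact: qdet_recSS.
by rewrite /qdet /= !qbin0 !mulr0 !subr0 !mulr1 !addr0; ring.
Qed.

End GaussianPolynomials.

Definition ballot_step (s : option (nat * nat * nat)) (a : nat) : option (nat * nat * nat) :=
  if s is Some (x, y, z) then
    if a == 0 then Some (x.+1, y, z)
    else if a == 1 then (if y < x then Some (x, y.+1, z) else None)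
    else if a == 2 then (if z < y then Some (x, y, z.+1) else None)
    else None
  else None.

Lemma eq_ballot_step0 s x y z :
  (ballot_step s 0 == Some (x, y, z)) = if x is x'.+1 then s == Some (x', y, z) else false.
Proof. by case: s => [[[a b] c]|]; case: x => [|x] //=; rewrite eqSS. Qed.

Lemma eq_ballot_step1 s x y z :
  (ballot_step s 1 == Some (x, y, z)) =
  if y is y'.+1 then (s == Some (x, y', z)) && (y' < x) else false.
Proof.
case: s => [[[a b] c]|]; case: y => [|y] //=; case: ifP => // ba.
- by apply/eqP => -[].
- by apply/eqP/andP => [[<- <- <-]|[/eqP[<- <- <-]]] //; rewrite eqxx ba.
- by apply/eqP/andP => // -[/eqP[<- <- <-]]; rewrite ba.
Qed.

Lemma eq_ballot_step2 s x y z :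
  (ballot_step s 2 == Some (x, y, z)) =
  if z is z'.+1 then (s == Some (x, y, z')) && (z' < y) else false.
Proof.
case: s => [[[a b] c]|]; case: z => [|z] //=; case: ifP => // cb.
- by apply/eqP => -[].
- by apply/eqP/andP => [[<- <- <-]|[/eqP[<- <- <-]]] //; rewrite eqxx cb.
- by apply/eqP/andP => // -[/eqP[<- <- <-]]; rewrite cb.
Qed.

Definition ballot (w : seq nat) := foldl ballot_step (Some (0, 0, 0)) w.

Lemma ballot_rcons u a : ballot (rcons u a) = ballot_step (ballot u) a.
Proof. by rewrite /ballot foldl_rcons. Qed.

(* 1-based positions [m] with [w_m < w_(m+1)]: for the row word of a tableau these are its descents. *)
Definition wdescents (w : seq nat) := [seq m <- iota 1 (size w).-1 | nth 0 w m.-1 < nth 0 w m].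
Definition wdes (w : seq nat) := size (wdescents w).
Definition wmaj (w : seq nat) := sumn (wdescents w).

Lemma wdescents_rcons u a : wdescents (rcons u a) =
  wdescents u ++ (if (0 < size u) && (last 0 u < a) then [:: size u] else [::]).
Proof.
rewrite /wdescents size_rcons.
have [->|u_neq0] := eqVneq u [::]; first by [].
have u_gt0 : 0 < size u by rewrite lt0n size_eq0.
have -> : iota 1 (size u) = iota 1 (size u).-1 ++ [:: size u].
  have -> : [:: size u] = iota (1 + (size u).-1) 1 by rewrite /= add1n (prednK u_gt0).
  by rewrite -iotaD addn1 (prednK u_gt0).
rewrite u_gt0 filter_cat; congr (_ ++ _).
  apply: eq_in_filter => m; rewrite mem_iota => /andP [m_gt0 m_lt].
  by rewrite !nth_rcons ifT ?ifT //; lia.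
rewrite /= !nth_rcons ltnn eqxx (_ : (size u).-1 < size u); last lia.
by rewrite (last_nth 0); case: u u_neq0 u_gt0.
Qed.

Lemma wdes_rcons u a : wdes (rcons u a) = wdes u + ((0 < size u) && (last 0 u < a)).
Proof. by rewrite /wdes wdescents_rcons size_cat; case: ifP. Qed.

Lemma wmaj_rcons u a :
  wmaj (rcons u a) = wmaj u + (if (0 < size u) && (last 0 u < a) then size u else 0).
Proof. by rewrite /wmaj wdescents_rcons sumn_cat; case: ifP => //= _; rewrite addn0. Qed.

(* Only a letter 1 or 2 can end an ascent, hence the bound on [wdes]. *)
Lemma ballot_bounds w x y z : ballot w = Some (x, y, z) ->
  [/\ z <= y <= x, size w = x + y + z & wdes w <= y + z].
Proof.
elim/last_ind: w x y z => [|u a IH] x y z; first by case=> <- <- <-.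
rewrite ballot_rcons size_rcons wdes_rcons.
case E: (ballot u) => [[[x' y'] z']|] //=.
have [/andP [le_zy le_yx] -> des_u] := IH _ _ _ E.
case: ifP => [/eqP -> [<- <- <-]|_]; first by split => //; lia.
case: ifP => [/eqP ->|_].
  by case: ifP => // lt_yx [<- <- <-]; split => //; lia.
case: ifP => [/eqP ->|_] //.
by case: ifP => // lt_zy [<- <- <-]; split => //; lia.
Qed.

Fixpoint words3 (N : nat) : seq (seq nat) :=
  if N is N'.+1 then [seq rcons u a | u <- words3 N', a <- iota 0 3] else [:: [::]].

Lemma words3S N : words3 N.+1 = [seq rcons u a | u <- words3 N, a <- iota 0 3].
Proof. by []. Qed.

Lemma mem_words3 N w : (w \in words3 N) = (size w == N) && all (fun a => a < 3) w.
Proof.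
elim: N w => [|N IH] w; first by case: w.
elim/last_ind: w => [|u a _].
  by apply/negbTE/allpairsP => -[[u a] [_ _ /=]]; case: u.
rewrite size_rcons eqSS all_rcons andbCA -IH.
apply/allpairsP/andP => [[[u' a'] [/= u'_in a'_in /rcons_inj [-> ->]]] | [a_lt u_in]].
  by split=> //; move: a'_in; rewrite !inE; case/or3P => /eqP ->.
by exists (u, a); split => //; rewrite mem_iota.
Qed.

Lemma uniq_words3 N : uniq (words3 N).
Proof.
elim: N => [|N IH] //.
apply: allpairs_uniq => //; try exact: iota_uniq.
by move=> [u a] [v b] _ _ /= /rcons_inj [-> ->].
Qed.

Definition tight_word (n j k : nat) (w : seq nat) : bool :=
  (ballot w == Some (n, j, k)) && (wdes w == j + k).

Lemma tight_word_size n j k w : tight_word n j k w -> size w = (n + j + k)%N.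
Proof. by case/andP => /eqP /ballot_bounds []. Qed.

Lemma tight_word_rcons0 n j k u : tight_word n.+1 j k (rcons u 0) = tight_word n j k u.
Proof.
by rewrite /tight_word ballot_rcons eq_ballot_step0 wdes_rcons ltn0 andbF addn0.
Qed.

Lemma tight_word_rcons1 n j k u : tight_word n j k (rcons u 1) =
  if j is j'.+1 then [&& tight_word n j' k u, 0 < size u, last 0 u == 0 & j' < n] else false.
Proof.
rewrite /tight_word ballot_rcons eq_ballot_step1 wdes_rcons.
case: j => [|j] //; case E: (ballot u == _) => //=.
have [_ _ des_u] := ballot_bounds (eqP E).
rewrite ltnS leqn0; case: (j < n) (0 < size u) (last 0 u == 0) => [] [] [] /=; lia.
Qed.

Lemma tight_word_rcons2 n j k u : tight_word n j k (rcons u 2) =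
  if k is k'.+1 then [&& tight_word n j k' u, 0 < size u, last 0 u < 2 & k' < j] else false.
Proof.
rewrite /tight_word ballot_rcons eq_ballot_step2 wdes_rcons.
case: k => [|k] //; case E: (ballot u == _) => //=.
have [_ _ des_u] := ballot_bounds (eqP E).
case: (k < j) (0 < size u) (last 0 u < 2) => [] [] [] /=; lia.
Qed.

Section WordGeneratingFunction.
Local Open Scope ring_scope.

Lemma big_words3_last N a (P : pred (seq nat)) (g : seq nat -> {poly int}) : (a < 3)%N ->
  \sum_(w <- words3 N.+1 | P w && (last 0%N w == a)) g w =
  \sum_(u <- words3 N | P (rcons u a)) g (rcons u a).
Proof.
move=> a_lt3; rewrite big_mkcond words3S big_allpairs_dep [RHS]big_mkcond.
apply: eq_bigr => u _; rewrite (bigD1_seq a) ?mem_iota ?iota_uniq //=.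
rewrite last_rcons eqxx andbT big1 ?addr0 // => b b_neq_a.
by rewrite last_rcons (negbTE b_neq_a) andbF.
Qed.

Definition fword (n j k : nat) : {poly int} :=
  \sum_(w <- words3 (n + j + k) | tight_word n j k w) 'X^(wmaj w).

Definition fword_end (a n j k : nat) : {poly int} :=
  \sum_(w <- words3 (n + j + k) | tight_word n j k w && (last 0%N w == a)) 'X^(wmaj w).

Lemma fword_end0 n j k : fword_end 0 n.+1 j k = fword n j k.
Proof.
rewrite /fword_end /fword !addSn big_words3_last //.
apply: eq_big => [u | u _]; first exact: tight_word_rcons0.
by rewrite wmaj_rcons ltn0 andbF addn0.
Qed.

Lemma sum_tight_rcons_ascent n j k a (Q : pred nat) :
  (0 < n + j + k)%N -> (forall b, Q b -> b < a)%N ->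
  \sum_(u <- words3 (n + j + k) | [&& tight_word n j k u, (0 < size u)%N & Q (last 0%N u)])
     'X^(wmaj (rcons u a)) =
  'X^(n + j + k) * \sum_(u <- words3 (n + j + k) | tight_word n j k u && Q (last 0%N u))
     'X^(wmaj u) :> {poly int}.
Proof.
move=> N_gt0 Q_lt; rewrite big_distrr; apply: eq_big => [u | u /and3P [tight_u u_gt0 Q_u]].
  by case tight_u: (tight_word n j k u); rewrite //= (tight_word_size tight_u) N_gt0.
by rewrite wmaj_rcons u_gt0 Q_lt // (tight_word_size tight_u) exprD mulrC.
Qed.

Lemma fword_end1 n j k : fword_end 1 n j k =
  if j is j'.+1 then (if (j' < n)%N then 'X^(n + j' + k) * fword_end 0 n j' k else 0) else 0.
Proof.
rewrite /fword_end; case: j => [|j].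
  rewrite big1 // => w /andP [tight_w]; case/lastP: w tight_w => [|u b] // tight_w.
  by rewrite last_rcons => /eqP b1; rewrite b1 tight_word_rcons1 in tight_w.
rewrite addnS addSn big_words3_last //.
under eq_bigl => u do rewrite tight_word_rcons1.
case: ltnP => [lt_jn | _]; last by rewrite big1 // => u; rewrite !andbF.
under eq_bigl => u do rewrite andbT.
by rewrite (sum_tight_rcons_ascent (Q := pred1 0%N)) //; [lia | move=> b /eqP ->].
Qed.

Lemma fword_end2 n j k : fword_end 2 n j k =
  if k is k'.+1 then
    (if (k' < j)%N then 'X^(n + j + k') * (fword_end 0 n j k' + fword_end 1 n j k') else 0)
  else 0.
Proof.
rewrite /fword_end; case: k => [|k].
  rewrite big1 // => w /andP [tight_w]; case/lastP: w tight_w => [|u b] // tight_w.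
  by rewrite last_rcons => /eqP b2; rewrite b2 tight_word_rcons2 in tight_w.
rewrite addnS big_words3_last //.
under eq_bigl => u do rewrite tight_word_rcons2.
case: ltnP => [lt_kj | _]; last by rewrite big1 // => u; rewrite !andbF.
under eq_bigl => u do rewrite andbT.
rewrite (sum_tight_rcons_ascent (Q := fun b => b < 2)%N) //; last lia.
rewrite (bigID (fun u => last 0%N u == 0%N)) /=; congr (_ * (_ + _)); apply: eq_bigl => u;
  by rewrite -andbA; case: (last 0%N u) => [|[|b]].
Qed.

Lemma fword_by_last n j k :
  fword n.+1 j k = fword_end 0 n.+1 j k + fword_end 1 n.+1 j k + fword_end 2 n.+1 j k.
Proof.
rewrite /fword /fword_end !addSn !big_words3_last // big_mkcond words3S big_allpairs_dep.
rewrite !(big_mkcond (fun u => tight_word _ _ _ (rcons u _))) -!big_split /=.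
by apply: eq_bigr => u _; rewrite !big_cons big_nil addr0 addrA.
Qed.

Lemma fword_rec n j k : (k <= j)%N -> (j <= n.+1)%N ->
  fword n.+1 j k = fword n j k
   + (if j is j'.+1 then 'X^(n.+1 + j' + k) * fword n j' k else 0)
   + (if k is k'.+1 then 'X^(n.+1 + j + k') *
        (fword n j k' + (if j is j'.+1 then 'X^(n.+1 + j' + k') * fword n j' k' else 0))
      else 0).
Proof.
move=> le_kj le_jn; case: k le_kj => [|k] le_kj; case: j le_kj le_jn => [|j] // le_kj le_jn;
  by rewrite fword_by_last fword_end2 !fword_end1 /= ?le_jn ?le_kj ?(leq_trans le_kj) ?fword_end0.
Qed.

Lemma fword_eq0 n j k : ~~ ((k <= j) && (j <= n))%N -> fword n j k = 0.
Proof.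
move=> out; rewrite /fword big1 // => w /andP [/eqP /ballot_bounds [/andP [le_kj le_jn] _ _] _].
by rewrite le_kj le_jn in out.
Qed.

Definition qweight (j k : nat) : nat := j ^ 2 + j * k + k ^ 2.

Lemma fword_qdet_out n j k : (k <= j.+1)%N -> (j <= n.+1)%N -> ~~ ((k <= j) && (j <= n))%N ->
  fword n j k = 'X^(qweight j k) * qdet n j k.
Proof. by move=> le_kj1 le_jn1 out; rewrite fword_eq0 // qdet_eq0 ?mulr0 //; lia. Qed.

Lemma fword_qdet n j k : (k <= j.+1)%N -> (j <= n.+1)%N ->
  fword n j k = 'X^(qweight j k) * qdet n j k.
Proof.
(* [qweight j.+1 k - qweight j k = 2j + k + 1] and symmetrically in [k]: this turns
   the prefactors of [fword_rec] into those of [qdet_rec]. *)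
elim: n j k => [|n IH] j k le_kj1 le_jn1.
  have [/andP [le_kj le_jn] | out] := boolP ((k <= j) && (j <= 0))%N; last exact: fword_qdet_out.
  have [-> ->] : j = 0%N /\ k = 0%N by lia.
  by rewrite /fword /= big_cons big_nil /qdet /= !mulr0 subr0 !mulr1 addr0.
have [/andP [le_kj le_jn] | out] := boolP ((k <= j) && (j <= n.+1))%N; last exact: fword_qdet_out.
case: j le_kj1 le_jn1 le_kj le_jn => [|j] le_kj1 le_jn1 le_kj le_jn.
  have -> : k = 0%N by lia.
  by rewrite fword_rec // qdet_rec // IH //= !addr0.
case: k le_kj1 le_kj => [|k] le_kj1 le_kj;
  rewrite fword_rec // qdet_rec // !IH //= ?addr0; try lia;
  move: (qdet n) => D; rewrite !mulrDr !mulrA -!exprD ?addrA; congr (_ + _);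
  try congr (_ + _); try congr (_ + _); congr (_ * _); congr ('X^ _); rewrite /qweight; nia.
Qed.

End WordGeneratingFunction.

Definition positions (r : nat) (w : seq nat) := [seq i <- iota 0 (size w) | nth 0 w i == r].
Definition npositions (r : nat) (w : seq nat) := size (positions r w).

Lemma mem_positions r w i : (i \in positions r w) = (i < size w) && (nth 0 w i == r).
Proof. by rewrite mem_filter mem_iota /= add0n andbC. Qed.

Lemma sorted_positions r w : sorted ltn (positions r w).
Proof. by apply: sorted_filter; [exact: ltn_trans | exact: iota_ltn_sorted]. Qed.

Lemma uniq_positions r w : uniq (positions r w).
Proof. exact: filter_uniq (iota_uniq _ _). Qed.

Lemma nth_positions_lt r w c : c < npositions r w -> nth 0 (positions r w) c < size w.
Proof. by move=> lt_c; have := mem_nth 0 lt_c; rewrite mem_positions => /andP []. Qed.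

Lemma nth_positions_val r w c : c < npositions r w -> nth 0 w (nth 0 (positions r w) c) = r.
Proof. by move=> lt_c; have := mem_nth 0 lt_c; rewrite mem_positions => /andP [_ /eqP]. Qed.

Lemma positions_rcons u a r :
  positions r (rcons u a) = if a == r then rcons (positions r u) (size u) else positions r u.
Proof.
rewrite /positions size_rcons -addn1 iotaD filter_cat add0n /= nth_rcons ltnn eqxx.
have -> : [seq i <- iota 0 (size u) | nth 0 (rcons u a) i == r] =
          [seq i <- iota 0 (size u) | nth 0 u i == r].
  by apply: eq_in_filter => i; rewrite mem_iota /= add0n nth_rcons => ->.
by case: (a == r); rewrite ?cats1 ?cats0.
Qed.

Lemma npositions_rcons u a r : npositions r (rcons u a) = npositions r u + (a == r).
Proof.
by rewrite /npositions positions_rcons; case: (a == r); rewrite ?size_rcons ?addn1 ?addn0.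
Qed.

(* The c-th letter [r.+1] comes after the c-th letter [r]: the columns of the
   tableau with row word [w] increase downwards. *)
Definition yamanouchi (w : seq nat) := forall r c, r < 2 -> c < npositions r.+1 w ->
  c < npositions r w /\ nth 0 (positions r w) c < nth 0 (positions r.+1 w) c.

Definition lattice_next (u : seq nat) (a : nat) :=
  [|| a == 0, (a == 1) && (npositions 1 u < npositions 0 u)
    | (a == 2) && (npositions 2 u < npositions 1 u)].

Lemma yamanouchi_rcons u a : yamanouchi u -> lattice_next u a -> yamanouchi (rcons u a).
Proof.
move=> yam_u next_a r c lt_r2; rewrite /npositions !positions_rcons.
case: eqP => [a_r1 | _ lt_c]; last first.
  have [lt_c' lt_pos] := yam_u r c lt_r2 lt_c.
  by case: (a == r); rewrite ?size_rcons ?nth_rcons ?lt_c' //; split => //; apply: ltnW.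
have -> : (a == r) = false by apply/eqP; lia.
rewrite size_rcons ltnS leq_eqVlt => /orP [/eqP c_last | lt_c]; last first.
  by have [lt_c' lt_pos] := yam_u r c lt_r2 lt_c; rewrite nth_rcons lt_c.
have lt_c : c < npositions r u.
  subst a c; move: next_a; rewrite /lattice_next /npositions.
  by case: r lt_r2 => [|[|r]] //= _; rewrite ?orbF.
by rewrite nth_rcons c_last ltnn eqxx -c_last; split => //; exact: nth_positions_lt.
Qed.

Lemma yamanouchi_rcons_inv u a : a < 3 -> yamanouchi (rcons u a) ->
  yamanouchi u /\ lattice_next u a.
Proof.
move=> lt_a3 yam_ua; split.
  move=> r c lt_r2 lt_c.
  have lt_c' : c < npositions r.+1 (rcons u a) by rewrite npositions_rcons; lia.
  move: (yam_ua r c lt_r2 lt_c'); rewrite /npositions !positions_rcons.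
  case: eqP => [a_r | _]; last by case: eqP => // _; rewrite nth_rcons lt_c.
  have -> : (a == r.+1) = false by apply/eqP; lia.
  rewrite size_rcons ltnS leq_eqVlt nth_rcons => -[/orP [/eqP c_last | ->] //].
  by rewrite c_last ltnn eqxx; have := nth_positions_lt lt_c; rewrite -c_last; lia.
rewrite /lattice_next; case: a lt_a3 yam_ua => [|[|[|a]]] // _ yam_ua /=.
- by rewrite orbF; have [] := yam_ua 0 (npositions 1 u) erefl; rewrite !npositions_rcons /= ?addn0 ?addn1.
- by have [] := yam_ua 1 (npositions 2 u) erefl; rewrite !npositions_rcons /= ?addn0 ?addn1.
Qed.

Lemma ballot_Some w s : ballot w = Some s -> [/\ all (fun a => a < 3) w, yamanouchi w
  & s = (npositions 0 w, npositions 1 w, npositions 2 w)].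
Proof.
elim/last_ind: w s => [|u a IH] s.
  by rewrite /ballot /= => [[<-]]; split => // r c; rewrite /npositions /positions.
rewrite ballot_rcons; case ballot_u: (ballot u) => [s'|] //.
have [all_u yam_u ->] := IH _ ballot_u.
rewrite all_rcons all_u andbT !npositions_rcons.
have next_ok b : lattice_next u b -> yamanouchi (rcons u b) by exact: yamanouchi_rcons.
case: a next_ok => [|[|[|a]]] //= next_ok; rewrite ?addn0 ?addn1.
- by case=> <-; split => //; apply: next_ok.
- by case: ifP => // lt_next [<-]; split => //; apply: next_ok; rewrite /lattice_next /= lt_next.
- by case: ifP => // lt_next [<-]; split => //; apply: next_ok; rewrite /lattice_next /= lt_next.
Qed.

Lemma ballot_yamanouchi w : all (fun a => a < 3) w -> yamanouchi w ->
  ballot w = Some (npositions 0 w, npositions 1 w, npositions 2 w).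
Proof.
elim/last_ind: w => [|u a IH] //; rewrite all_rcons => /andP [lt_a3 all_u] yam_ua.
have [yam_u] := yamanouchi_rcons_inv lt_a3 yam_ua.
rewrite ballot_rcons (IH all_u yam_u) !npositions_rcons /lattice_next.
by case: a {lt_a3 yam_ua} => [|[|[|a]]] //=; rewrite ?orbF ?addn0 ?addn1 // => ->.
Qed.

Definition row_word (la : seq nat) (T : filling la) : seq nat :=
  [seq row_of T m | m <- iota 1 (size_of la)].

Lemma size_row_word la (T : filling la) : size (row_word T) = size_of la.
Proof. by rewrite size_map size_iota. Qed.

Lemma nth_row_word la (T : filling la) i : i < size_of la -> nth 0 (row_word T) i = row_of T i.+1.
Proof. by move=> lt_i; rewrite (nth_map 0) ?size_iota // nth_iota. Qed.

Lemma descents_row_word la (T : filling la) : descents T = wdescents (row_word T).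
Proof.
rewrite /descents /wdescents size_row_word; apply: eq_in_filter => m.
rewrite mem_iota => /andP [m_gt0 m_lt].
by rewrite /is_descent !nth_row_word ?prednK //; lia.
Qed.

Section StandardTableaux.
Variables (la : seq nat) (T : filling la).
Hypothesis SYT_T : is_SYT T.

Lemma SYT_out x : ~~ in_diagram x -> T x = 0 :> nat.
Proof. by case/and5P: SYT_T => /forallP /(_ x) /implyP out_x _ _ _ _ /out_x /eqP. Qed.

Lemma SYT_gt0 x : in_diagram x -> 0 < T x.
Proof. by case/and5P: SYT_T => _ /forallP /(_ x) /implyP gt0_x _ _ _ /gt0_x. Qed.

Lemma SYT_inj x y : in_diagram x -> in_diagram y -> T x = T y :> nat -> x = y.
Proof.
case/and5P: SYT_T => _ _ /forallP /(_ x) /forallP /(_ y) /implyP inj_xy _ _ Dx Dy Txy.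
by apply/eqP/inj_xy; rewrite Dx Dy; apply/eqP/val_inj.
Qed.

Lemma SYT_row_lt x y : in_diagram x -> in_diagram y ->
  x.1 = y.1 :> nat -> x.2 < y.2 -> T x < T y.
Proof.
case/and5P: SYT_T => _ _ _ /forallP /(_ x) /forallP /(_ y) /implyP row_xy _ Dx Dy Exy lt_xy.
by apply: row_xy; rewrite Dx Dy Exy eqxx lt_xy.
Qed.

Lemma SYT_col_lt x y : in_diagram x -> in_diagram y ->
  x.2 = y.2 :> nat -> x.1 < y.1 -> T x < T y.
Proof.
case/and5P: SYT_T => _ _ _ _ /forallP /(_ x) /forallP /(_ y) /implyP col_xy Dx Dy Exy lt_xy.
by apply: col_xy; rewrite Dx Dy Exy eqxx lt_xy.
Qed.

Lemma row_of_entry x : in_diagram x -> row_of T (T x) = x.1.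
Proof.
move=> Dx; rewrite /row_of; case: pickP => [y /andP [Dy /eqP Tyx] | no_x].
  by rewrite (SYT_inj Dy Dx Tyx).
by have := no_x x; rewrite Dx eqxx.
Qed.

(* The N entries are distinct elements of [1, N]. *)
Lemma SYT_onto : #|[set x : box la | in_diagram x]| = size_of la ->
  forall m, 0 < m <= size_of la -> exists2 x, in_diagram x & T x = m :> nat.
Proof.
move=> card_diagram m /andP [m_gt0 m_le].
set D := [set x : box la | in_diagram x].
have entries_sub : [set T x | x in D] \subset [set~ ord0].
  apply/subsetP => v /imsetP [x]; rewrite inE => Dx ->.
  by rewrite !inE; apply/eqP => /(congr1 val) /= Tx0; have := SYT_gt0 Dx; rewrite Tx0.
have card_entries : #|[set T x | x in D]| = size_of la.
  rewrite card_in_imset ?card_diagram // => x y; rewrite !inE => Dx Dy Txy.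
  by apply: SYT_inj Dx Dy _; rewrite Txy.
have entries : [set T x | x in D] = [set~ ord0].
  apply/eqP; rewrite eqEcard entries_sub cardsC1 card_ord card_entries /=; lia.
have : (inord m : 'I_(size_of la).+1) \in [set~ ord0].
  by rewrite !inE; apply/eqP => /(congr1 val) /=; rewrite inordK; lia.
rewrite -entries => /imsetP [x]; rewrite inE => Dx Tx.
by exists x => //; rewrite -Tx inordK //; lia.
Qed.

End StandardTableaux.

Definition shape3 n j k : seq nat := [:: n.+1; j; k].

Definition cell n j k (r c : nat) : box (shape3 n j k) := (inord r, inord c).

Lemma cell1 n j k r c : r < 3 -> (cell n j k r c).1 = r :> nat.
Proof. by move=> lt_r3; rewrite /= inordK. Qed.

Lemma cell2 n j k r c : c < n.+1 -> (cell n j k r c).2 = c :> nat.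
Proof. by move=> lt_cn; rewrite /= inordK. Qed.

Lemma cellK n j k (x : box (shape3 n j k)) : cell n j k x.1 x.2 = x.
Proof. by case: x => a b; rewrite /cell !inord_val. Qed.

Lemma row_word_lt3 n j k (T : filling (shape3 n j k)) : all (fun a => a < 3) (row_word T).
Proof. by apply/allP => a /mapP [m _ ->]; rewrite /row_of; case: pickP => [x _|_]. Qed.

Section ThreeRowShape.
Variables n j k : nat.
Hypotheses (le_jn : j <= n.+1) (le_kn : k <= n.+1).
Local Notation la := (shape3 n j k).

Lemma row_length_le r : r < 3 -> nth 0 la r <= n.+1.
Proof. by case: r => [|[|[|r]]]. Qed.

Lemma in_diagram_cell r c : r < 3 -> c < nth 0 la r -> in_diagram (cell n j k r c).
Proof.
move=> lt_r3 lt_c; rewrite /in_diagram cell1 // cell2 //.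
exact: leq_trans lt_c (row_length_le lt_r3).
Qed.

Lemma card_diagram3 : #|[set x : box la | in_diagram x]| = size_of la.
Proof.
have sum_ltn m a : (\sum_(i < m) (i < a) = minn a m)%N.
  elim: m => [|m IH]; first by rewrite big_ord0 minn0.
  by rewrite big_ord_recr /= IH; lia.
transitivity (\sum_(r : 'I_3) \sum_(c : 'I_n.+1) ((c : nat) < nth 0 la r))%N.
  rewrite pair_bigA -sum1_card big_mkcond /=; apply: eq_bigr => -[r c] _.
  by rewrite inE /in_diagram /=; case: ifP.
under eq_bigr => r _ do rewrite sum_ltn.
by rewrite !big_ord_recl big_ord0 /= /size_of /=; lia.
Qed.

Variable T : filling la.
Hypothesis SYT_T : is_SYT T.

Lemma positions_row_word r : r < 3 ->
  positions r (row_word T) = [seq (T (cell n j k r c)).-1 | c <- iota 0 (nth 0 la r)].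
Proof.
move=> lt_r3; have le_row := row_length_le lt_r3.
apply: (irr_sorted_eq ltn_trans ltnn); first exact: sorted_positions.
  apply: (homo_sorted_in (e := ltn) (e' := ltn) (P := fun c => c < nth 0 la r)).
  - move=> c1 c2 lt_c1 lt_c2 lt_c12.
    have D1 := in_diagram_cell lt_r3 lt_c1; have D2 := in_diagram_cell lt_r3 lt_c2.
    have := SYT_row_lt SYT_T D1 D2 (erefl _); rewrite !cell2; try lia.
    by move=> /(_ lt_c12); have := SYT_gt0 SYT_T D1; lia.
  - by apply/allP => c; rewrite mem_iota.
  - exact: iota_ltn_sorted.
move=> i; rewrite mem_positions size_row_word.
apply/andP/mapP => [[lt_i]|[c]].
  rewrite nth_row_word //.
  have [x Dx Tx] := SYT_onto SYT_T card_diagram3 (m := i.+1) ltac:(lia).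
  rewrite -Tx row_of_entry // => /eqP row_x.
  exists (x.2 : nat); first by rewrite mem_iota add0n -row_x.
  by rewrite -row_x cellK Tx.
rewrite mem_iota add0n => lt_c ->.
have Dc := in_diagram_cell lt_r3 lt_c.
have := SYT_gt0 SYT_T Dc; have := ltn_ord (T (cell n j k r c)) => lt_N gt0.
split; first lia.
by rewrite nth_row_word ?prednK ?row_of_entry ?cell1 //; lia.
Qed.

Lemma nth_positions_row_word r c : r < 3 -> c < nth 0 la r ->
  (nth 0 (positions r (row_word T)) c).+1 = T (cell n j k r c).
Proof.
move=> lt_r3 lt_c.
rewrite positions_row_word // (nth_map 0) ?size_iota // nth_iota // add0n prednK //.
exact: (SYT_gt0 SYT_T (in_diagram_cell lt_r3 lt_c)).
Qed.

Lemma npositions_row_word r : r < 3 -> npositions r (row_word T) = nth 0 la r.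
Proof. by move=> lt_r3; rewrite /npositions positions_row_word // size_map size_iota. Qed.

Lemma ballot_row_word : k <= j -> ballot (row_word T) = Some (n.+1, j, k).
Proof.
move=> le_kj; rewrite ballot_yamanouchi ?row_word_lt3 ?npositions_row_word //.
move=> r c lt_r2; rewrite !npositions_row_word //; try lia.
move=> lt_c; have lt_c' : c < nth 0 la r by case: r lt_r2 lt_c => [|[|r]] //= _; lia.
split=> //.
have lt_r3 : r < 3 by lia.
have lt_r13 : r.+1 < 3 by lia.
have := SYT_col_lt SYT_T (in_diagram_cell lt_r3 lt_c') (in_diagram_cell lt_r13 lt_c) (erefl _).
rewrite !cell1 // -!nth_positions_row_word // ltnS; exact.
Qed.

End ThreeRowShape.

Lemma row_word_inj n j k (T1 T2 : filling (shape3 n j k)) : j <= n.+1 -> k <= n.+1 ->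
  is_SYT T1 -> is_SYT T2 -> row_word T1 = row_word T2 -> T1 = T2.
Proof.
move=> le_jn le_kn SYT1 SYT2 row12; apply/ffunP => x; apply: val_inj.
have [Dx|out_x] := boolP (in_diagram x); last by rewrite /= (SYT_out SYT1 out_x) (SYT_out SYT2 out_x).
by rewrite /= -(cellK x) -!nth_positions_row_word // ?row12 //; exact: ltn_ord.
Qed.

Definition tableau_of_word n j k (w : seq nat) : filling (shape3 n j k) :=
  [ffun x => if in_diagram x then inord (nth 0 (positions x.1 w) x.2).+1 else ord0].

Lemma yamanouchi_lt w r1 r2 c : yamanouchi w -> r1 < r2 -> r2 < 3 -> c < npositions r2 w ->
  c < npositions r1 w /\ nth 0 (positions r1 w) c < nth 0 (positions r2 w) c.
Proof.
move=> yam_w; case: r2 => [|[|[|r2]]] //; case: r1 => [|[|r1]] // _ _ lt_c.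
- exact: yam_w 0 c erefl lt_c.
- have [lt_c1 lt12] := yam_w 1 c erefl lt_c.
  have [lt_c0 lt01] := yam_w 0 c erefl lt_c1.
  by split=> //; apply: ltn_trans lt01 lt12.
- exact: yam_w 1 c erefl lt_c.
Qed.

Section WordToTableau.
Variables n j k : nat.
Hypotheses (le_kj : k <= j) (le_jn : j <= n.+1).
Variable w : seq nat.
Hypotheses (size_w : size w = size_of (shape3 n j k)) (ballot_w : ballot w = Some (n.+1, j, k)).
Local Notation T := (tableau_of_word n j k w).

Lemma npositions_shape3 r : r < 3 -> npositions r w = nth 0 (shape3 n j k) r.
Proof.
have [_ _ [E0 E1 E2]] := ballot_Some ballot_w.
by case: r => [|[|[|r]]] //= _; rewrite -?E0 -?E1 -?E2.
Qed.

Lemma npositions_cell (x : box (shape3 n j k)) : in_diagram x -> x.2 < npositions x.1 w.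
Proof. by rewrite npositions_shape3 //; exact: ltn_ord. Qed.

Lemma tableau_of_wordE x : in_diagram x -> T x = (nth 0 (positions x.1 w) x.2).+1 :> nat.
Proof.
move=> Dx; rewrite ffunE Dx inordK // ltnS -size_w.
exact/nth_positions_lt/npositions_cell.
Qed.

Lemma tableau_of_word_SYT : is_SYT T.
Proof.
have [_ yam_w _] := ballot_Some ballot_w.
apply/and5P; split; apply/forallP => x; try apply/forallP => y; apply/implyP.
- by move=> out_x; rewrite ffunE (negbTE out_x).
- by move=> Dx; rewrite tableau_of_wordE.
- move=> /andP [/andP [Dx Dy] /eqP /(congr1 val)]; rewrite /= !tableau_of_wordE // => -[] Exy.
  have lt_x := npositions_cell Dx; have lt_y := npositions_cell Dy.
  have row_xy : x.1 = y.1 :> nat.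
    by rewrite -(nth_positions_val lt_x) -(nth_positions_val lt_y) Exy.
  rewrite row_xy in lt_x Exy.
  have col_xy : x.2 = y.2 :> nat.
    by apply/eqP; rewrite -(nth_uniq 0 lt_x lt_y (uniq_positions _ _)) Exy.
  by apply/eqP; rewrite [x]surjective_pairing [y]surjective_pairing (val_inj row_xy) (val_inj col_xy).
- move=> /andP [/andP [/andP [Dx Dy] /eqP row_xy] lt_xy].
  rewrite !tableau_of_wordE // -row_xy ltnS.
  have lt_y := npositions_cell Dy; rewrite -row_xy in lt_y.
  exact: (sorted_ltn_nth ltn_trans 0 (sorted_positions x.1 w) x.2 y.2 (npositions_cell Dx) lt_y lt_xy).
- move=> /andP [/andP [/andP [Dx Dy] /eqP col_xy] lt_xy].
  rewrite !tableau_of_wordE // -col_xy ltnS.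
  have lt_y := npositions_cell Dy; rewrite -col_xy in lt_y.
  by have [] := yamanouchi_lt yam_w lt_xy (ltn_ord _) lt_y.
Qed.

Lemma row_word_tableau_of_word : row_word T = w.
Proof.
have [all_w _ _] := ballot_Some ballot_w.
apply: (@eq_from_nth _ 0); first by rewrite size_row_word size_w.
move=> i; rewrite size_row_word => lt_i; rewrite nth_row_word //.
set r := nth 0 w i; set c := index i (positions r w).
have lt_r3 : r < 3 by apply: (allP all_w); apply: mem_nth; rewrite size_w.
have i_in : i \in positions r w by rewrite mem_positions size_w lt_i eqxx.
have lt_c : c < nth 0 (shape3 n j k) r by rewrite -npositions_shape3 // /c index_mem.
have le_kn := leq_trans le_kj le_jn.
have le_row := row_length_le le_jn le_kn lt_r3.
have Dc := in_diagram_cell le_jn le_kn lt_r3 lt_c.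
have := tableau_of_wordE Dc; rewrite cell1 // cell2; last lia.
by rewrite nth_index // => <-; rewrite row_of_entry ?tableau_of_word_SYT // cell1.
Qed.

End WordToTableau.

Section TableauGeneratingFunction.
Local Open Scope ring_scope.

Lemma f_poly_fword n j k : (k <= j)%N -> (j <= n.+1)%N ->
  f_poly (shape3 n j k) (j + k) = fword n.+1 j k.
Proof.
move=> le_kj le_jn; have le_kn : (k <= n.+1)%N by lia.
have size_shape : size_of (shape3 n j k) = (n.+1 + j + k)%N by rewrite /size_of /= addn0 addnA.
rewrite /f_poly /fword -size_shape.
transitivity (\sum_(T : filling (shape3 n j k) | is_SYT T && tight_word n.+1 j k (row_word T))
                 'X^(wmaj (row_word T)) : {poly int}).
  apply: eq_big => [T|T _]; last by rewrite /maj descents_row_word.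
  case SYT_T: (is_SYT T) => //=.
  by rewrite /tight_word ballot_row_word // eqxx /des descents_row_word.
apply: (@big_reindex_seq _ _ _ _ _ _ (@row_word _) _ _ (fun w => 'X^(wmaj w))).
- exact: uniq_words3.
- by move=> T1 T2 /andP [SYT1 _] /andP [SYT2 _]; apply: row_word_inj.
- move=> T /andP [SYT_T tight_T].
  by rewrite mem_words3 size_row_word eqxx row_word_lt3 tight_T.
- move=> w; rewrite mem_words3 => /andP [/eqP size_w _] tight_w.
  have ballot_w : ballot w = Some (n.+1, j, k) by case/andP: tight_w => /eqP.
  exists (tableau_of_word n j k w); last exact: row_word_tableau_of_word.
  by rewrite tableau_of_word_SYT // row_word_tableau_of_word.
Qed.

Lemma f_poly_empty : f_poly [:: 0%N; 0%N; 0%N] 0 = 1.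
Proof.
rewrite /f_poly (eq_bigl xpredT); last first.
  move=> T; rewrite /des /descents /= andbT.
  by apply/and5P; split; apply/forallP => -[a [b lt_b0]].
rewrite (eq_bigr (fun _ => 1)) => [|T _]; last by rewrite /maj /descents.
by rewrite sumr_const card_ffun card_prod !card_ord muln0 expn0.
Qed.

End TableauGeneratingFunction.

Local Open Scope ring_scope.

Theorem mainTheorem8 (n j k : nat) (hkj : (k <= j)%N) (hjn : (j <= n)%N) :
  f_poly [:: n; j; k] (j + k)%N =
  'X^(j ^ 2 + j * k + k ^ 2)%N *
    (qbinom n%:Z j%:Z * qbinom n%:Z k%:Z
     - 'X^(j - k + 1)%N * qbinom n%:Z (j%:Z + 1) * qbinom n%:Z (k%:Z - 1)).
Proof.
have -> : (j - k + 1 = j.+1 - k)%N by lia.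
rewrite (_ : j%:Z + 1 = j.+1%:Z); last by rewrite -addn1 PoszD.
rewrite qbinom_subr1 !qbinomE -/(qdet n j k).
case: n hjn => [|n] hjn.
  have [-> ->] : j = 0%N /\ k = 0%N by lia.
  by rewrite f_poly_empty /qdet /= mulr0 subr0 !mulr1.
by rewrite -[[:: _; _; _]]/(shape3 n j k) f_poly_fword // fword_qdet //; lia.
Qed.
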